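(* Let $X$ be a continuous L-space with spatial part $Y$, and let $U\in{\sf ClopUp}(X)$. The following are equivalent: (1) $\ker U=\mathrm{core}\,U$; (2) $\mathrm{core}\,U$ is dense in $U$; (3) for each $y\in U\cap Y$ there is $V\in{\sf ClopSUp}(X)$ with $y\in V\subseteq U$; (4) for each Scott upset $F\subseteq\ker U$ there is $V\in{\sf ClopSUp}(X)$ with $F\subseteq V\subseteq U$.
   Context: A Priestley space is a Stone space $X$ with a partial order such that clopen upsets separate points. An L-space is a Priestley space in which the downset of each clopen set is clopen and the closure of each open upset is open. ${\sf ClopUp}(X)$ is the set of clopen upsets of $X$; $\mathrm{cl}$ denotes closure. The spatial part of $X$ is $Y=\{y\in X\mid{\downarrow}y\text{ is clopen}\}$. A Scott upset is a closed upset $F$ with $\min F\subseteq Y$; ${\sf ClopSUp}(X)$ is the set of clopen Scott upsets. For $U,V\in{\sf ClopUp}(X)$, write $V\ll U$ if for every open upset $W$ of $X$, $U\subseteq\mathrm{cl}\,W$ implies $V\subseteq W$. Define $\ker U=\bigcup\{V\in{\sf ClopUp}(X)\mid V\ll U\}$ and $\mathrm{core}\,U=\bigcup\{V\in{\sf ClopSUp}(X)\mid V\subseteq U\}$. $X$ is a continuous L-space if $\ker U$ is dense in $U$ for all $U\in{\sf ClopUp}(X)$. *)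

From mathcomp Require Import all_boot all_order.
From mathcomp Require Import all_classical all_reals all_analysis.
Set Implicit Arguments. Unset Strict Implicit. Unset Printing Implicit Defensive.
Local Open Scope classical_set_scope.

Section Priestley.
Context {T : topologicalType} (le : T -> T -> Prop).

Definition partial_order := [/\ (forall x, le x x),
  (forall x y, le x y -> le y x -> x = y) &
  (forall x y z, le x y -> le y z -> le x z)].

Definition stone_space := [/\ compact [set: T], hausdorff_space T &
  (forall (A : set T) x, open A -> A x ->
     exists B : set T, [/\ clopen B, B x & B `<=` A])].

Definition upset (A : set T) := forall x y, A x -> le x y -> A y.
Definition downset_of (A : set T) := [set x | exists2 y, A y & le x y].

Definition priestley := [/\ stone_space, partial_order &
  (forall x y, ~ le x y -> exists U : set T, [/\ clopen U, upset U, U x & ~ U y])].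

Definition Lspace := [/\ priestley,
  (forall U : set T, clopen U -> clopen (downset_of U)) &
  (forall U : set T, open U -> upset U -> open (closure U))].

Definition ClopUp (U : set T) := clopen U /\ upset U.

Definition spatial := [set y : T | clopen (downset_of [set y])].

Definition minimal (F : set T) := [set x | F x /\ forall z, F z -> le z x -> z = x].

Definition scott_upset (F : set T) := [/\ closed F, upset F & minimal F `<=` spatial].

Definition ClopSUp (U : set T) := clopen U /\ scott_upset U.

Definition way_below (V U : set T) :=
  forall W : set T, open W -> upset W -> U `<=` closure W -> V `<=` W.

Definition ker (U : set T) := [set x | exists V, [/\ ClopUp V, way_below V U & V x]].
Definition core (U : set T) := [set x | exists V, [/\ ClopSUp V, V `<=` U & V x]].

Definition dense_in (A B : set T) := A `<=` B /\ B `<=` closure A.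

Definition continuous_Lspace :=
  Lspace /\ forall U : set T, ClopUp U -> dense_in (ker U) U.
End Priestley.

From Pilot Require Import Defs.
From mathcomp Require Import all_boot all_order.
From mathcomp Require Import all_classical all_reals all_analysis.
Set Implicit Arguments. Unset Strict Implicit. Unset Printing Implicit Defensive.
Local Open Scope classical_set_scope.

(* (1) => (2) is the continuity of X, and (2) => (3) holds because a
   spatial point y of U has an open neighbourhood, its principal downset, which
   must meet core U.  For (3) => (4), the clopen Scott upsets through the
   (spatial) minimal points of F cover F; by compactness one finite union of
   them, again a clopen Scott upset, contains F.
   For (4) => (1), core U is always inside ker U: a clopen Scott upset V inside
   U is way below U: a minimal point of V outside an open upset W with U in
   cl W would be spatial, and its open downset would meet W, putting it in W.
   Conversely, if V << U then, by density of kernels and compactness, V << W << U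
   for some clopen upset W; iterating gives U = s_0 >> s_1 >> ... >> V, and the
   intersection F of the s_n is a Scott upset with V in F and F in ker U.  A
   minimal point m of F is spatial: otherwise m lies in cl(X - down m), which is
   an open set containing F, so s_N is inside cl(X - down m) for some N by
   compactness, and s_(N+1) << s_N forces m in s_(N+1) to lie in X - down m. *)

Section CompactDirected.
Context {T : topologicalType}.
Hypothesis Tcompact : compact [set: T].

Lemma compact_directed_meet (I : Type) (D : set I) (f : I -> set T) :
  D !=set0 -> (forall i, D i -> closed (f i)) -> (forall i, D i -> f i !=set0) ->
  (forall i j, D i -> D j -> exists2 k, D k & f k `<=` f i `&` f j) ->
  exists p, forall i, D i -> f i p.
Proof.
move=> Dne fcl fne fdir.
have PF := filter_from_proper (filter_from_filter Dne fdir) fne.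
have [|p [_ cp]] := Tcompact PF; first exact: filterT.
exists p => i Di; apply: fcl => // B nB.
by apply: cp => //; exists i.
Qed.

Lemma compact_directed_cover (I : Type) (D : set I) (g : I -> set T) (K : set T) :
  closed K -> D !=set0 -> (forall i, D i -> open (g i)) ->
  (forall i j, D i -> D j -> exists2 k, D k & g i `|` g j `<=` g k) ->
  K `<=` \bigcup_(i in D) g i -> exists2 i, D i & K `<=` g i.
Proof.
move=> Kcl Dne gop gdir Kcov; apply: contrapT => noi.
have fne i : D i -> (K `&` ~` g i) !=set0.
  move=> Di; apply: contrapT => /set0P/negP/negbNE/eqP K0.
  apply: noi; exists i => // x Kx; apply: contrapT => gx.
  by have : (K `&` ~` g i) x by []; rewrite K0.
have [|p Hp] := compact_directed_meet Dne
    (fun i Di => closedI Kcl (open_closedC (gop i Di))) fne.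
  move=> i j Di Dj; have [k Dk gk] := gdir i j Di Dj.
  by exists k => // x [Kx gx]; split; split => // ?; apply: gx; apply: gk; [left|right].
have [i0 Di0] := Dne; have [j Dj gjp] := Kcov p (Hp i0 Di0).1.
exact: (Hp j Dj).2 gjp.
Qed.

Lemma compact_nonincreasing_sub (s : nat -> set T) (G : set T) :
  (forall n, closed (s n)) -> (forall n, s n.+1 `<=` s n) -> open G ->
  \bigcap_n s n `<=` G -> exists N, s N `<=` G.
Proof.
move=> scl sdec Gop sG.
have smono m n : (m <= n)%N -> s n `<=` s m.
  move=> /subnK <-; elim: (n - m)%N => // k IH; exact: subset_trans (sdec _) IH.
pose g n := G `|` ~` s n.
have gop n : [set: nat] n -> open (g n) by move=> _; apply: openU Gop (closed_openC (scl n)).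
have gdir i j : [set: nat] i -> [set: nat] j -> exists2 k, [set: nat] k & g i `|` g j `<=` g k.
  move=> _ _; exists (maxn i j) => // x [] [Gx|sx]; [by left|right|by left|right].
    by move=> /(smono i _ (leq_maxl i j)).
  by move=> /(smono j _ (leq_maxr i j)).
have gcov : [set: T] `<=` \bigcup_(n in [set: nat]) g n.
  move=> x _; have [sx|/existsNP[n nsx]] := pselect (forall n, s n x).
    by exists 0%N => //; left; apply: sG.
  by exists n => //; right.
have [N _ GN] := compact_directed_cover closedT (ex_intro _ 0%N I) gop gdir gcov.
by exists N => x sx; have [] := GN x I.
Qed.

End CompactDirected.

Section WayBelow.
Context {T : topologicalType} (le : T -> T -> Prop).

Lemma ClopUp0 : ClopUp le set0.
Proof. by split; [exact: clopen0|move=> x y]. Qed.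

Lemma ClopUpU V1 V2 : ClopUp le V1 -> ClopUp le V2 -> ClopUp le (V1 `|` V2).
Proof.
move=> [c1 u1] [c2 u2]; split; first exact: clopenU.
by move=> x y [/u1 V1y|/u2 V2y] xy; [left; apply: V1y|right; apply: V2y].
Qed.

Lemma ClopSUp_ClopUp V : ClopSUp le V -> ClopUp le V.
Proof. by case=> Vc [_ Vup _]. Qed.

Lemma ClopSUp0 : ClopSUp le set0.
Proof. by split; [exact: clopen0|split; [exact: closed0|move=> x y|move=> x []]]. Qed.

Lemma ClopSUpU V1 V2 : ClopSUp le V1 -> ClopSUp le V2 -> ClopSUp le (V1 `|` V2).
Proof.
move=> [c1 [_ u1 m1]] [c2 [_ u2 m2]].
have [cU uU] := ClopUpU (conj c1 u1) (conj c2 u2).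
split=> //; split=> //; first exact: cU.2.
move=> x [[V1x|V2x] xmin]; [apply: m1|apply: m2]; split=> // z Vz zx.
  by apply: xmin => //; left.
by apply: xmin => //; right.
Qed.

Lemma way_below_subset V U : open U -> upset le U -> way_below le V U -> V `<=` U.
Proof. by move=> Uop Uup; apply => //; exact: subset_closure. Qed.

Lemma way_belowSl V' V U : V' `<=` V -> way_below le V U -> way_below le V' U.
Proof. by move=> V'V VU W Wop Wup UW x /V'V; apply: VU. Qed.

Lemma way_belowSr V U U' : U `<=` U' -> way_below le V U -> way_below le V U'.
Proof. by move=> UU' VU W Wop Wup U'W; apply: VU => // x /UU' /U'W. Qed.

Lemma way_below0 U : way_below le set0 U.
Proof. by move=> W _ _ _ x. Qed.

Lemma way_belowU V1 V2 U : way_below le V1 U -> way_below le V2 U ->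
  way_below le (V1 `|` V2) U.
Proof. by move=> V1U V2U W Wop Wup UW x [/V1U|/V2U]; apply. Qed.

Lemma open_ker U : open (ker le U).
Proof.
rewrite openE => x [V [Vc VU Vx]]; have [[Vop _] _] := Vc.
by apply: filterS (open_nbhs_nbhs (conj Vop Vx)) => y Vy; exists V.
Qed.

Lemma upset_ker U : upset le (ker le U).
Proof. by move=> x y [V [[Vc Vup] VU Vx]] xy; exists V; split => //; apply: Vup Vx xy. Qed.

Lemma kerS U U' : U `<=` U' -> ker le U `<=` ker le U'.
Proof. by move=> UU' x [V [Vc VU Vx]]; exists V; split => //; exact: way_belowSr VU. Qed.

Lemma ker_sub U : open U -> upset le U -> ker le U `<=` U.
Proof. by move=> Uop Uup x [V [_ VU Vx]]; exact: (way_below_subset Uop Uup VU). Qed.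

End WayBelow.

Section Priestley.
Context {T : topologicalType} (le : T -> T -> Prop).
Hypothesis HP : priestley le.

Lemma priestley_compact : compact [set: T].
Proof. by case: HP => -[]. Qed.

Lemma priestley_refl x : le x x.
Proof. by case: HP => _ [refl _ _] _; exact: refl. Qed.

Lemma priestley_anti x y : le x y -> le y x -> x = y.
Proof. by case: HP => _ [_ anti _] _; exact: anti. Qed.

Lemma priestley_trans x y z : le x y -> le y z -> le x z.
Proof. by case: HP => _ [_ _ trans] _; exact: trans. Qed.

Lemma downset_of1_refl c : downset_of le [set c] c.
Proof. by exists c => //; exact: priestley_refl. Qed.

Lemma closed_downset_of1 c : closed (downset_of le [set c]).
Proof.
move=> y cly; apply: contrapT => ny.
have nyc : ~ le y c by move=> yc; apply: ny; exists c.
case: HP => _ _ /(_ _ _ nyc) [V [[Vop _] Vup Vy Vc]].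
have [z [[_ -> zc] Vz]] := cly V (open_nbhs_nbhs (conj Vop Vy)).
by apply: Vc; apply: Vup Vz zc.
Qed.

Lemma upset_ndownset_of1 c : upset le (~` downset_of le [set c]).
Proof.
by move=> a b na ab [_ -> bc]; apply: na; exists c => //; exact: priestley_trans ab bc.
Qed.

Lemma chain_lower_bound (K A : set T) : closed K -> A `<=` K -> A !=set0 ->
  total_on A le -> exists2 p, K p & forall a, A a -> le p a.
Proof.
move=> Kcl AK [a0 Aa0] Atot.
pose f a := K `&` downset_of le [set a].
have fS a b : le a b -> f a `<=` f b.
  by move=> ab z [Kz [_ -> za]]; split => //; exists b => //; exact: priestley_trans za ab.
have fne a : A a -> f a !=set0.
  by move=> Aa; exists a; split; [exact: AK|exact: downset_of1_refl].
have fdir a b : A a -> A b -> exists2 k, A k & f k `<=` f a `&` f b.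
  move=> Aa Ab; have [ab|ba] := Atot a b Aa Ab.
    by exists a => // z fz; split => //; exact: fS ab _ fz.
  by exists b => // z fz; split => //; exact: fS ba _ fz.
have fcl a : A a -> closed (f a) by move=> _; exact: closedI Kcl (closed_downset_of1 (c := a)).
have [p fp] := compact_directed_meet priestley_compact (ex_intro _ a0 Aa0) fcl fne fdir.
exists p; first exact: (fp a0 Aa0).1.
by move=> a /fp [_ [_ -> ]].
Qed.

Lemma minimal_below (K : set T) x : closed K -> K x ->
  exists2 m, Defs.minimal le K m & le m x.
Proof.
move=> Kcl Kx.
pose B := K `&` downset_of le [set x].
have Bcl : closed B := closedI Kcl (closed_downset_of1 (c := x)).
pose R (a b : {y | B y}) := `[< le (sval b) (sval a) >].
have [m mmax] : exists m, forall a, R m a -> a = m.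
  apply: Zorn.
  - by move=> a; apply/asboolP; exact: priestley_refl.
  - by move=> a b c /asboolP ab /asboolP bc; apply/asboolP; exact: priestley_trans bc ab.
  - by move=> [a Ba] [b Bb] /asboolP ab /asboolP ba; exact/eq_exist/priestley_anti.
  move=> A Atot; have [[a0 Aa0]|A0] := pselect (A !=set0); last first.
    by exists (exist _ x (conj Kx (downset_of1_refl x))) => a Aa; case: A0; exists a.
  have AB : sval @` A `<=` B by move=> _ [a _ <-]; exact: svalP.
  have Atot' : total_on (sval @` A) le.
    move=> _ _ [a Aa <-] [b Ab <-].
    by have [/asboolP|/asboolP] := Atot a b Aa Ab; [right|left].
  have [p Bp pA] := chain_lower_bound Bcl AB (ex_intro _ (sval a0) (imageP sval Aa0)) Atot'.
  by exists (exist _ p Bp) => a Aa; apply/asboolP; apply: pA; exists a.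
have [Km [_ -> mx]] := proj2_sig m.
exists (sval m) => //; split => // z Kz zm.
have Bz : B z by split => //; exists x => //; exact: priestley_trans zm mx.
by have /(congr1 sval) := mmax (exist _ z Bz) (asboolT zm).
Qed.

Lemma ClopSUp_way_below V U : ClopSUp le V -> V `<=` U -> way_below le V U.
Proof.
move=> [[_ Vcl] [_ Vup Vmin]] VU W Wop Wup UW y Vy; apply: contrapT => Wy.
have [m [[Vm Wm] mmin] _] :=
  minimal_below (closedI Vcl (open_closedC Wop)) (conj Vy Wy).
have [msp _] : spatial le m.
  apply: Vmin; split => // z Vz zm; apply: mmin => //; split => // Wz.
  by apply: Wm; apply: Wup Wz zm.
have [w [Ww [_ -> wm]]] :=
  UW m (VU m Vm) _ (open_nbhs_nbhs (conj msp (downset_of1_refl m))).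
by apply: Wm; apply: Wup Ww wm.
Qed.

Lemma way_below_ker V W : ClopUp le V -> way_below le V W <-> V `<=` ker le W.
Proof.
move=> Vc; split=> [VW x Vx|Vker]; first by exists V.
have Vcl : closed V := Vc.1.2.
pose D := [set V' | ClopUp le V' /\ way_below le V' W].
have Dop V' : D V' -> open V' by case=> [[[]]].
have Ddir V1 V2 : D V1 -> D V2 -> exists2 V', D V' & V1 `|` V2 `<=` V'.
  move=> [c1 w1] [c2 w2]; exists (V1 `|` V2) => //.
  by split; [exact: ClopUpU|exact: way_belowU].
have Vcov : V `<=` \bigcup_(V' in D) V' by move=> x /Vker [V' [? ? ?]]; exists V'.
have D0 : D set0 by split; [exact: ClopUp0|exact: way_below0].
have [V' [_ V'W] VV'] :=
  compact_directed_cover priestley_compact Vcl (ex_intro _ _ D0) Dop Ddir Vcov.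
exact: way_belowSl VV' V'W.
Qed.

Lemma core_sub_ker U : core le U `<=` ker le U.
Proof.
move=> x [V [Vc VU Vx]]; exists V.
by split => //; [exact: ClopSUp_ClopUp|exact: ClopSUp_way_below].
Qed.

Lemma dense_core_spatial U : dense_in (core le U) U ->
  forall y, U y -> spatial le y -> exists V, [/\ ClopSUp le V, V y & V `<=` U].
Proof.
move=> [_ Ucore] y Uy [ysp _].
have [z [[V [Vc VU Vz]] [_ -> zy]]] :=
  Ucore y Uy _ (open_nbhs_nbhs (conj ysp (downset_of1_refl y))).
by exists V; split => //; case: Vc => _ [_ Vup _]; exact: Vup Vz zy.
Qed.

Lemma scott_upset_cover U : open U -> upset le U ->
  (forall y, U y -> spatial le y -> exists V, [/\ ClopSUp le V, V y & V `<=` U]) ->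
  forall F, scott_upset le F -> F `<=` ker le U ->
  exists V, [/\ ClopSUp le V, F `<=` V & V `<=` U].
Proof.
move=> Uop Uup Uspatial F [Fcl _ Fmin] Fker.
pose D := [set V | ClopSUp le V /\ V `<=` U].
have D0 : D set0 by split; [exact: ClopSUp0|].
have Dop V : D V -> open V by case=> [[[]]].
have Ddir V1 V2 : D V1 -> D V2 -> exists2 V, D V & V1 `|` V2 `<=` V.
  move=> [c1 s1] [c2 s2]; exists (V1 `|` V2) => //; split; first exact: ClopSUpU.
  by move=> x [/s1|/s2].
have Fcov : F `<=` \bigcup_(V in D) V.
  move=> x Fx; have [m Fm mx] := minimal_below Fcl Fx.
  have [V [Vc Vm VU]] := Uspatial m (ker_sub Uop Uup (Fker m Fm.1)) (Fmin m Fm).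
  by exists V => //; case: Vc => _ [_ Vup _]; exact: Vup Vm mx.
have [V [Vc VU] FV] :=
  compact_directed_cover priestley_compact Fcl (ex_intro _ _ D0) Dop Ddir Fcov.
by exists V.
Qed.

End Priestley.

Section Lspace.
Context {T : topologicalType} (le : T -> T -> Prop).
Hypothesis HL : Defs.Lspace le.
Let HP : priestley le := let: And3 HP _ _ := HL in HP.

Lemma open_closure_upset O : open O -> upset le O -> open (closure O).
Proof. by case: HL => _ _; apply. Qed.

Lemma upset_closure O : open O -> upset le O -> upset le (closure O).
Proof.
move=> Oop Oup z w Oz zw; apply: contrapT => Ow.
have [_ clopen_down _] := HL.
have [Dop _] : clopen (downset_of le (~` closure O)).
  apply: clopen_down; split; first exact/closed_openC/closed_closure.
  by rewrite -openC setCK; exact: open_closure_upset.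
have Dz : downset_of le (~` closure O) z by exists w.
have [y [Oy [v Ov yv]]] := Oz _ (open_nbhs_nbhs (conj Dop Dz)).
by apply: Ov; apply: subset_closure; exact: Oup Oy yv.
Qed.

Lemma spatial_nclosure m : ~ closure (~` downset_of le [set m]) m -> spatial le m.
Proof.
move=> ncl; change (clopen (downset_of le [set m])).
have Dcl := closed_downset_of1 HP (c := m).
have Oop := closed_openC Dcl.
have Oup := upset_ndownset_of1 HP (c := m).
have -> : downset_of le [set m] = ~` closure (~` downset_of le [set m]).
  apply/seteqP; split => x.
    by move=> [_ -> xm] Ox; apply: ncl; exact: (upset_closure Oop Oup Ox xm).
  by move=> nOx; apply: contrapT => nx; apply: nOx; exact: subset_closure.
split; first exact/closed_openC/closed_closure.
by rewrite -openC setCK; exact: open_closure_upset.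
Qed.

End Lspace.

Section ContinuousLspace.
Context {T : topologicalType} (le : T -> T -> Prop).
Hypothesis HX : continuous_Lspace le.
Let HL : Defs.Lspace le := HX.1.
Let HP : priestley le := let: And3 HP _ _ := HL in HP.

Lemma subset_closure_bigcup_ker U : ClopUp le U ->
  U `<=` closure (\bigcup_(W in [set W | ClopUp le W /\ way_below le W U]) ker le W).
Proof.
move=> Uc; set G := \bigcup_(W in _) _.
have kerG : ker le U `<=` closure G.
  move=> x [W [Wc WU Wx]].
  have WG : closure (ker le W) `<=` closure G by apply: closureS => y kery; exists W.
  exact/WG/(HX.2 W Wc).2.
move=> x /(HX.2 U Uc).2 /(closureS kerG).
exact: closed_closure.
Qed.

Lemma way_below_interpolate V U : ClopUp le V -> ClopUp le U -> way_below le V U ->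
  exists W, [/\ ClopUp le W, way_below le V W & way_below le W U].
Proof.
move=> Vc Uc VU.
pose D := [set W | ClopUp le W /\ way_below le W U].
have D0 : D set0 by split; [exact: ClopUp0|exact: way_below0].
have Dker W : D W -> open (ker le W) by move=> _; exact: open_ker.
have Ddir W1 W2 : D W1 -> D W2 ->
    exists2 W, D W & ker le W1 `|` ker le W2 `<=` ker le W.
  move=> [c1 w1] [c2 w2]; exists (W1 `|` W2).
    by split; [exact: ClopUpU|exact: way_belowU].
  by move=> x [] /kerS; apply => y; [left|right].
have VG : V `<=` \bigcup_(W in D) ker le W.
  apply: VU (subset_closure_bigcup_ker Uc).
    by apply: bigcup_open => W _; exact: open_ker.
  by move=> x y [W DW Wx] xy; exists W => //; exact: upset_ker Wx xy.
have [W [Wc WU] VW] := compact_directed_cover (priestley_compact HP) Vc.1.2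
  (ex_intro _ _ D0) Dker Ddir VG.
by exists W; split => //; apply/(way_below_ker HP).
Qed.

Lemma way_below_chain V U : ClopUp le V -> ClopUp le U -> way_below le V U ->
  exists s : nat -> set T, [/\ s 0%N = U,
    forall n, ClopUp le (s n) /\ way_below le V (s n) &
    forall n, way_below le (s n.+1) (s n)].
Proof.
move=> Vc Uc VU.
have step W : exists W', ClopUp le W /\ way_below le V W ->
    [/\ ClopUp le W', way_below le V W' & way_below le W' W].
  have [[Wc VW]|nW] := pselect (ClopUp le W /\ way_below le V W).
    by have [W' ?] := way_below_interpolate Vc Wc VW; exists W'.
  by exists set0.
have [f fP] := choice step.
pose s n := iter n f U.
have sP n : ClopUp le (s n) /\ way_below le V (s n).
  by elim: n => [|n [Sc VS]] //=; have [] := fP (s n) (conj Sc VS).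
by exists s; split => // n; have [] := fP (s n) (sP n).
Qed.

Lemma scott_upset_bigcap (s : nat -> set T) :
  (forall n, ClopUp le (s n)) -> (forall n, way_below le (s n.+1) (s n)) ->
  scott_upset le (\bigcap_n s n).
Proof.
move=> sc sdec.
have ssub n : s n.+1 `<=` s n.
  by have [[Sop _] Sup] := sc n; exact: way_below_subset Sop Sup (sdec n).
split.
- by apply: closed_bigI => n _; exact: (sc n).1.2.
- by move=> x y Fx xy n _; exact: (sc n).2 _ _ (Fx n I) xy.
move=> m [Fm mmin]; apply: (spatial_nclosure HL) => mO.
have Oop := closed_openC (closed_downset_of1 HP (c := m)).
have Oup := upset_ndownset_of1 HP (c := m).
have FO : \bigcap_n s n `<=` closure (~` downset_of le [set m]).
  move=> y Fy; have [ym|nym] := pselect (le y m); first by rewrite (mmin y Fy ym).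
  by apply: subset_closure => -[_ -> ].
have [N sNO] := compact_nonincreasing_sub (priestley_compact HP)
  (fun n => (sc n).1.2) ssub (open_closure_upset HL Oop Oup) FO.
exact: (sdec N _ Oop Oup sNO m (Fm N.+1 I) (downset_of1_refl HP m)).
Qed.

Lemma scott_upset_between V U : ClopUp le V -> ClopUp le U -> way_below le V U ->
  exists F, [/\ scott_upset le F, V `<=` F & F `<=` ker le U].
Proof.
move=> Vc Uc VU; have [s [s0 sP sdec]] := way_below_chain Vc Uc VU.
exists (\bigcap_n s n); split.
- by apply: scott_upset_bigcap => n; [exact: (sP n).1|exact: sdec].
- by move=> x Vx n _; have [[[Sop _] Sup] VS] := sP n; exact: way_below_subset Sop Sup VS _ Vx.
- move=> x Fx; exists (s 1%N).
  by split; [exact: (sP 1%N).1|rewrite -s0; exact: sdec|exact: Fx].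
Qed.

Lemma ker_sub_core U : ClopUp le U ->
  (forall F, scott_upset le F -> F `<=` ker le U ->
     exists V, [/\ ClopSUp le V, F `<=` V & V `<=` U]) ->
  ker le U `<=` core le U.
Proof.
move=> Uc Ucover x [V [Vc VU Vx]].
have [F [Fscott VF Fker]] := scott_upset_between Vc Uc VU.
have [W [Wc FW WU]] := Ucover F Fscott Fker.
by exists W; split => //; exact/FW/VF.
Qed.

End ContinuousLspace.

Unset Implicit Arguments. Set Strict Implicit.

Theorem lemma4p6 (T : topologicalType) (le : T -> T -> Prop)
  (HX : continuous_Lspace le) (U : set T) (HU : ClopUp le U) :
  [<-> ker le U = core le U;
       dense_in (core le U) U;
       (forall y, U y -> spatial le y ->
          exists V, [/\ ClopSUp le V, V y & V `<=` U]);
       (forall F : set T, scott_upset le F -> F `<=` ker le U ->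
          exists V, [/\ ClopSUp le V, F `<=` V & V `<=` U])].
Proof.
have [[HP _ _] ker_dense] := HX.
tfae.
- by move=> kerE; rewrite -kerE; exact: ker_dense.
- exact: dense_core_spatial.
- exact: scott_upset_cover HU.1.1 HU.2.
- by move=> Ucover; apply/seteqP; split; [exact: ker_sub_core|exact: core_sub_ker].
Qed.
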